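(* Let $n\ge3$, $d=\phi(n)/2$, $G=\mathrm{Gal}(\mathbf Q(\mu_n)|\mathbf Q)$, $c\in G$ complex conjugation, and let $\Phi=\{\Phi_1,\dots,\Phi_d\}\subseteq G$ be a C.M. type (so $G=\Phi\sqcup c\Phi$). Let $f:G\to\mathbf C$ be odd, i.e. $f(c\circ x)=-f(x)$ for all $x$, and let $M_f$ be the $d\times d$ matrix $[f(\Phi_k^{-1}\circ\Phi_l)]_{l,k}$. If $\langle\chi,f\rangle\neq0$ for all odd characters $\chi$ of $G$, then $M_f$ is invertible and the solution of $M_f\vec X=\vec Y$, $\vec X=(X_1,\dots,X_d)$, $\vec Y=(Y_1,\dots,Y_d)$, is $$X_j=\sum_{\chi\ \mathrm{odd}}\frac{\chi(\Phi_j)\sum_l\overline\chi(\Phi_l)Y_l}{d^2\langle f,\chi\rangle}.$$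
   Context: $\langle a,b\rangle=\frac1{\#G}\sum_{g\in G}a(g)\overline{b(g)}$. A character $\chi$ of $G$ is odd if $\chi(c)=-1$. *)

From HB Require Import structures.
From mathcomp Require Import all_boot all_order all_algebra all_fingroup all_solvable all_field all_character.
Set Implicit Arguments. Unset Strict Implicit. Unset Printing Implicit Defensive.
Import GRing.Theory Num.Theory.
Local Open Scope ring_scope.

(* G = Gal(Q(mu_n)|Q) identified with (Z/nZ)^x via sigma_a(zeta) = zeta^a. *)
Definition Gal_cyc (n : nat) : finGroupType := {unit 'Z_n}.

(* complex conjugation = sigma_{-1} *)
Definition cconj (n : nat) : Gal_cyc n := @FinRing.Unit ('Z_n) (-1) (unitrN1 ('Z_n)).

Definition dotG (gT : finGroupType) (a b : gT -> algC) : algC :=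
  (#|gT|%:R)^-1 * \sum_(g : gT) a g * (b g)^*.

Definition CM_type (gT : finGroupType) (c : gT) (d : nat) (Phi : 'I_d -> gT) : Prop :=
  injective Phi /\ (forall k l, (c * Phi k)%g != Phi l) /\
  (forall x : gT, exists k, x = Phi k \/ x = (c * Phi k)%g).

Definition odd_fun (gT : finGroupType) (c : gT) (f : gT -> algC) : Prop :=
  forall x, f (c * x)%g = - f x.

Definition Mf (gT : finGroupType) (d : nat) (Phi : 'I_d -> gT) (f : gT -> algC)
  : 'M[algC]_d := \matrix_(l < d, k < d) f ((Phi k)^-1 * Phi l)%g.

From HB Require Import structures.
From mathcomp Require Import all_boot all_order all_algebra all_fingroup all_solvable all_field all_character.
From mathcomp Require Import ring.
Set Implicit Arguments.
Unset Strict Implicit.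
Unset Printing Implicit Defensive.
Import GRing.Theory Num.Theory.
Local Open Scope ring_scope.

(* The row vectors (conj chi(Phi_l))_l, for chi odd, are left eigenvectors of
   M_f with eigenvalue d <f, chi>: as f and chi are both odd, the sum over Phi
   is half the sum over G, which is #|G| <f, chi> up to a translation by Phi_k.
   By the second orthogonality relation, sum_(chi odd) chi(Phi_j) conj chi(Phi_k)
   = d [j = k], so these d eigenvectors form a basis and invert M_f explicitly. *)

Lemma dotG_conjC (gT : finGroupType) (a b : gT -> algC) :
  (dotG a b)^* = dotG b a.
Proof.
rewrite /dotG rmorphM fmorphV rmorph_nat rmorph_sum /=; congr (_ * _).
by apply: eq_bigr => g _; rewrite rmorphM /= conjCK mulrC.
Qed.

Section CMType.

Variables (gT : finGroupType) (c : gT) (d : nat) (Phi : 'I_d -> gT).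
Hypothesis CM : CM_type c Phi.

Lemma sum_CM_type (R : nmodType) (h : gT -> R) :
  \sum_x h x = \sum_k h (Phi k) + \sum_k h (c * Phi k)%g.
Proof.
have [injPhi [cPhi_neq coverPhi]] := CM.
rewrite (bigID (mem (Phi @: 'I_d))) /= big_imset /=; last first.
  by move=> x y _ _; apply: injPhi.
congr (_ + _); rewrite -(big_imset _ (in2W (inj_comp (mulgI c) injPhi))) /=.
apply: eq_bigl => x; apply/idP/imsetP => [notPhi_x | [k _ ->]].
  have [k [x_eq | ->]] := coverPhi x; last by exists k.
  by rewrite x_eq imset_f in notPhi_x.
by apply/imsetP => -[l _ /eqP]; rewrite (negbTE (cPhi_neq k l)).
Qed.

Lemma card_CM_type : #|gT| = d.*2.
Proof.
by rewrite -sum1_card (@sum_CM_type nat (fun=> 1%N)) !sum_nat_const card_ord muln1 -addnn.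
Qed.

Lemma CM_type_natr_neq0 : (d%:R : algC) != 0.
Proof.
by rewrite pnatr_eq0 -lt0n -double_gt0 -card_CM_type; apply/card_gt0P; exists 1%g.
Qed.

End CMType.

Section OddCharacters.

Variables (gT : finGroupType) (c : gT) (d : nat) (Phi : 'I_d -> gT).
Hypotheses (abG : abelian [set: gT]) (c_invol : (c * c = 1)%g).
Hypothesis CM : CM_type c Phi.

Local Notation G := [set: gT]%G.

Lemma abelian_commute (x y : gT) : commute x y.
Proof. exact: centsP abG x (in_setT x) y (in_setT y). Qed.

Lemma irr_abelianM (i : Iirr G) x y : 'chi_i (x * y)%g = 'chi_i x * 'chi_i y.
Proof. by rewrite (lin_charM (char_abelianP G abG i)) ?inE. Qed.

Lemma irr_invol_sign (i : Iirr G) : ('chi_i c == 1) || ('chi_i c == -1).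
Proof.
by rewrite -sqrf_eq1 expr2 -irr_abelianM c_invol (lin_char1 (char_abelianP G abG i)).
Qed.

Lemma sum_irr_mul_conjC x y :
  \sum_(i : Iirr G) 'chi_i x * ('chi_i y)^* = #|gT|%:R *+ (x == y).
Proof.
rewrite second_orthogonality_relation ?inE // (abelian_classP _ abG) ?inE //.
rewrite (setIidPl _) ?cardsT // sub_cent1.
by apply: subsetP abG x (in_setT x).
Qed.

Lemma sum_odd_irr_mul_conjC j k :
  \sum_(i : Iirr G | 'chi_i c == -1) 'chi_i (Phi j) * ('chi_i (Phi k))^*
    = d%:R *+ (j == k).
Proof.
have [injPhi [cPhi_neq _]] := CM.
have one_neqN1 : ((1 : algC) == -1) = false.
  by apply/negbTE; rewrite -addr_eq0 -mulr2n -mulr_natl mulr1 pnatr_eq0.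
pose a i x := 'chi[G]_i x * ('chi_i (Phi k))^*.
have odd_part i : (if 'chi_i c == -1 then a i (Phi j) else 0) *+ 2
                  = a i (Phi j) - a i (c * Phi j)%g.
  rewrite /a irr_abelianM.
  by case/orP: (irr_invol_sign i) => /eqP ->;
    rewrite ?eqxx ?one_neqN1 ?mul0rn ?mul1r ?subrr // mulN1r mulNr opprK mulr2n.
apply: (@pmulrnI _ 2) => //; rewrite big_mkcond -sumrMnl /=.
rewrite (eq_bigr _ (fun i _ => odd_part i)) sumrB !sum_irr_mul_conjC.
rewrite (inj_eq injPhi) (negbTE (cPhi_neq j k)) subr0 (card_CM_type CM).
by rewrite -muln2 natrM mulr_natr -mulrnA mulnC mulrnA.
Qed.

Variable f : gT -> algC.
Hypothesis oddf : odd_fun c f.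

Lemma sum_Phi_odd_fun (i : Iirr G) k : 'chi_i c = -1 ->
  \sum_l ('chi_i (Phi l))^* * f ((Phi k)^-1 * Phi l)%g
    = ('chi_i (Phi k))^* * d%:R * dotG f (fun x => 'chi_i x).
Proof.
move=> odd_i; pose h x := ('chi_i x)^* * f ((Phi k)^-1 * x)%g.
have h_c x : h (c * x)%g = h x.
  rewrite /h irr_abelianM odd_i mulN1r rmorphN mulgA -(abelian_commute c) -mulgA.
  by rewrite oddf mulrNN.
have := sum_CM_type CM h; rewrite (eq_bigr _ (fun l _ => h_c (Phi l))) -mulr2n.
rewrite (reindex_inj (mulgI (Phi k))) /= => sum_h.
apply: (@pmulrnI _ 2) => //; rewrite -sum_h /h /dotG.
under eq_bigr => g _ do rewrite mulKg irr_abelianM rmorphM /= -mulrA (mulrC _ (f g)).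
rewrite -big_distrr /= mulrA (card_CM_type CM) -mul2n natrM -mulr_natr.
by field; rewrite (CM_type_natr_neq0 CM).
Qed.

Lemma sum_conjC_irr_Mf_mul (i : Iirr G) m (X : 'M_(d, m)) q : 'chi_i c = -1 ->
  \sum_l ('chi_i (Phi l))^* * (Mf Phi f *m X) l q
    = d%:R * dotG f (fun x => 'chi_i x) * \sum_l ('chi_i (Phi l))^* * X l q.
Proof.
move=> odd_i; under eq_bigr => l _ do rewrite mxE big_distrr.
rewrite exchange_big big_distrr; apply: eq_bigr => k _ /=.
under eq_bigr => l _ do rewrite mxE mulrA.
by rewrite -big_distrl sum_Phi_odd_fun //=; ring.
Qed.

Hypothesis dot_odd_neq0 :
  forall i : Iirr G, 'chi_i c = -1 -> dotG f (fun x => 'chi_i x) != 0.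

Definition Mf_inv : 'M[algC]_d := \matrix_(j, l)
  \sum_(i : Iirr G | 'chi_i c == -1)
    'chi_i (Phi j) * ('chi_i (Phi l))^* / ((d ^ 2)%:R * dotG f (fun x => 'chi_i x)).

Lemma Mf_inv_mulE m (Y : 'M_(d, m)) j q :
  (Mf_inv *m Y) j q = \sum_(i : Iirr G | 'chi_i c == -1)
    'chi_i (Phi j) * (\sum_l ('chi_i (Phi l))^* * Y l q) /
    ((d ^ 2)%:R * dotG f (fun x => 'chi_i x)).
Proof.
rewrite mxE; under eq_bigr do rewrite mxE big_distrl.
rewrite exchange_big; apply: eq_bigr => i _ /=.
rewrite big_distrr big_distrl; apply: eq_bigr => l _ /=.
by ring.
Qed.

Lemma Mf_invK m (X : 'M_(d, m)) : Mf_inv *m (Mf Phi f *m X) = X.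
Proof.
have d_neq0 := CM_type_natr_neq0 CM.
apply/matrixP => j q; rewrite Mf_inv_mulE.
transitivity (d%:R^-1 * \sum_(i : Iirr G | 'chi_i c == -1)
    \sum_l 'chi_i (Phi j) * ('chi_i (Phi l))^* * X l q).
  rewrite [RHS]big_distrr; apply: eq_bigr => i /eqP odd_i /=.
  rewrite sum_conjC_irr_Mf_mul //; under [X in _ = _ * X]eq_bigr do rewrite -mulrA.
  rewrite -big_distrr /=.
  move: (dot_odd_neq0 odd_i) (\sum_l _) => D_neq0 S.
  by rewrite natrX; field; rewrite d_neq0.
rewrite exchange_big /=.
under eq_bigr => l _ do rewrite -big_distrl /= sum_odd_irr_mul_conjC.
rewrite (bigD1 j) //= big1 ?addr0 ?eqxx ?mulr1n ?mulKf //.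
by move=> l; rewrite eq_sym => /negbTE ->; rewrite mulr0n mul0r.
Qed.

Lemma mulmx_Mf_inv : Mf_inv *m Mf Phi f = 1%:M.
Proof. by rewrite -[Mf_inv *m _]mulmx1 -mulmxA Mf_invK. Qed.

End OddCharacters.

Lemma Gal_cyc_abelian n : abelian [set: Gal_cyc n].
Proof.
by apply/centsP => x _ y _; apply: val_inj; rewrite !FinRing.val_unitM mulrC.
Qed.

Lemma cconj_invol n : (cconj n * cconj n = 1)%g.
Proof.
by apply: val_inj; rewrite FinRing.val_unitM FinRing.val_unit1 /= mulrNN mulr1.
Qed.

Theorem lemma5p4 (n : nat) (hn : (3 <= n)%N)
  (Phi : 'I_(totient n %/ 2) -> Gal_cyc n)
  (hPhi : CM_type (cconj n) Phi)
  (f : Gal_cyc n -> algC) (hf : odd_fun (cconj n) f)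
  (hchi : forall i : Iirr [set: Gal_cyc n]%G,
      'chi_i (cconj n) = -1 -> dotG (fun x => 'chi_i x) f != 0) :
  Mf Phi f \in unitmx /\
  forall X Y : 'cV[algC]_(totient n %/ 2), Mf Phi f *m X = Y ->
    forall j, X j ord0 =
      \sum_(i : Iirr [set: Gal_cyc n]%G | 'chi_i (cconj n) == -1)
        'chi_i (Phi j) * (\sum_l ('chi_i (Phi l))^* * Y l ord0) /
        (((totient n %/ 2) ^ 2)%:R * dotG f (fun x => 'chi_i x)).
Proof.
have abG := Gal_cyc_abelian n; have c_invol := cconj_invol n.
have dot_odd_neq0 (i : Iirr [set: Gal_cyc n]%G) :
    'chi_i (cconj n) = -1 -> dotG f (fun x => 'chi_i x) != 0.
  by move=> odd_i; rewrite -dotG_conjC conjC_eq0; apply: hchi.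
split.
  by have [] := mulmx1_unit (mulmx_Mf_inv abG c_invol hPhi hf dot_odd_neq0).
by move=> X Y <- j; rewrite -Mf_inv_mulE (Mf_invK abG c_invol hPhi hf dot_odd_neq0).
Qed.
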